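(* Let $X$ be a real Banach space and let $Y,Z$ be closed subspaces of $X$ with $Z\subseteq Y\subseteq X$. If $Z$ is a semi $M$-ideal in $X$ and $Y/Z$ has property-$(wU)$ in $X/Z$, then $Y$ has property-$(wU)$ in $X$.
   Context: $Y$ has property-$(wU)$ in $X$ if every $y^*\in Y^*$ that attains its norm on the unit sphere $S_Y$ (i.e. $\|y^*\|=y^*(y_0)$ for some $y_0\in S_Y$) has a unique extension $x^*\in X^*$ with $x^*|_Y=y^*$ and $\|x^*\|=\|y^*\|$. A closed subspace $J$ of $X$ is a semi $M$-ideal if $X^*=J^\perp\oplus_{\ell_1}W$ for some closed subset $W\subseteq X^*$, i.e. every $x^*\in X^*$ decomposes uniquely as $x^*=u+w$ with $u\in J^\perp$, $w\in W$, and $\|x^*\|=\|u\|+\|w\|$ (equivalently, $J$ has the $2$-ball property in $X$); here $J^\perp=\{x^*\in X^*:x^*|_J=0\}$. $Y/Z$ is regarded as a subspace of $X/Z$ with the quotient norm. *)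

From HB Require Import structures.
From mathcomp Require Import all_boot all_order all_algebra.
From mathcomp Require Import all_classical all_reals all_analysis.
Set Implicit Arguments. Unset Strict Implicit. Unset Printing Implicit Defensive.
Import Order.TTheory GRing.Theory Num.Theory.
Import numFieldNormedType.Exports.
Local Open Scope classical_set_scope.
Local Open Scope ring_scope.

Section Defs.
Variables (R : realType) (X : normedModType R).

Definition closed_subspace (S : set X) : Prop :=
  [/\ S 0, (forall x y, S x -> S y -> S (x + y)),
      (forall (a : R) x, S x -> S (a *: x)) & closed S].

Definition linear_on (S : set X) (f : X -> R) : Prop :=
  forall (a : R) x y, S x -> S y -> f (a *: x + y) = a * f x + f y.

Definition bounded_on (S : set X) (f : X -> R) : Prop :=
  exists M : R, forall x, S x -> `|f x| <= M * `|x|.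

(* element of S^* represented by any function X -> R (only its values on S
   matter) *)
Definition functional_on (S : set X) (f : X -> R) : Prop :=
  linear_on S f /\ bounded_on S f.

Definition fnorm (S : set X) (f : X -> R) : R :=
  sup [set `|f x| | x in [set x | S x /\ `|x| <= 1]].

Definition dual (f : X -> R) : Prop := functional_on setT f.

Definition annihilator (J : set X) (f : X -> R) : Prop :=
  dual f /\ forall x, J x -> f x = 0.

Definition dual_closed (W : set (X -> R)) : Prop :=
  (forall w, W w -> dual w) /\
  forall f, dual f ->
    (forall e : R, 0 < e -> exists2 w, W w & fnorm setT (f \- w) < e) -> W f.

Definition property_wU (Y : set X) : Prop :=
  forall g : X -> R, functional_on Y g ->
    (exists y0, [/\ Y y0, `|y0| = 1 & g y0 = fnorm Y g]) ->
    exists f : X -> R,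
      [/\ dual f, (forall y, Y y -> f y = g y), fnorm setT f = fnorm Y g &
        forall f' : X -> R, dual f' -> (forall y, Y y -> f' y = g y) ->
          fnorm setT f' = fnorm Y g -> forall x, f' x = f x].

Definition semi_M_ideal (J : set X) : Prop :=
  closed_subspace J /\
  exists W : set (X -> R), dual_closed W /\
    forall xs : X -> R, dual xs ->
      exists u : X -> R, exists w : X -> R,
        [/\ annihilator J u, W w, (forall x, xs x = u x + w x),
            fnorm setT xs = fnorm setT u + fnorm setT w &
            forall u' w', annihilator J u' -> W w' ->
              (forall x, xs x = u' x + w' x) ->
              (forall x, u' x = u x) /\ (forall x, w' x = w x)].

Definition qnorm (Z : set X) (x : X) : R := inf [set `|x + z| | z in Z].

(* a functional on S/Z (Z <= S), represented by a function X -> R which is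
   linear on S, vanishes on Z and is bounded for the quotient norm *)
Definition qfunctional_on (Z S : set X) (f : X -> R) : Prop :=
  [/\ linear_on S f, (forall z, Z z -> f z = 0) &
      exists M : R, forall x, S x -> `|f x| <= M * qnorm Z x].

Definition qfnorm (Z S : set X) (f : X -> R) : R :=
  sup [set `|f x| | x in [set x | S x /\ qnorm Z x <= 1]].

Definition quotient_property_wU (Z Y : set X) : Prop :=
  forall g : X -> R, qfunctional_on Z Y g ->
    (exists y0, [/\ Y y0, qnorm Z y0 = 1 & g y0 = qfnorm Z Y g]) ->
    exists f : X -> R,
      [/\ qfunctional_on Z setT f, (forall y, Y y -> f y = g y),
          qfnorm Z setT f = qfnorm Z Y g &
        forall f' : X -> R, qfunctional_on Z setT f' ->
          (forall y, Y y -> f' y = g y) ->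
          qfnorm Z setT f' = qfnorm Z Y g -> forall x, f' x = f x].

End Defs.

From HB Require Import structures.
From mathcomp Require Import all_boot all_order all_algebra.
From mathcomp Require Import all_classical all_reals all_analysis.
From mathcomp Require Import lra.
Import Order.TTheory GRing.Theory Num.Theory.
Import numFieldNormedType.Exports.
Local Open Scope classical_set_scope.
Local Open Scope ring_scope.

(* By Hahn-Banach, [g] has a norm-preserving extension [f]. Let [f'] be another
   one and write [f = u + w], [f' = u' + w'] with [u, u'] in [Z^perp] and
   [w, w'] in [W]. As [f - f'] vanishes on [Z], so does [w - w'], and the
   uniqueness of decompositions forces [w = w']. Hence [u] and [u'] agree on
   [Y] and, the decompositions being l1, have the same norm. Since [g] attains
   its norm at [y0], so does [u], and [y0 + Z] has quotient norm 1 unless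
   [u = 0]. Thus [u] and [u'] are norm-preserving extensions to [X/Z] of a
   functional on [Y/Z] attaining its norm, and property-(wU) of [Y/Z] gives
   [u = u'], i.e. [f = f']. *)

Set Implicit Arguments.
Unset Strict Implicit.

Section HahnBanach.
Variables (R : realType) (V : lmodType R) (p : V -> R).
Hypotheses (p_subadd : forall x y, p (x + y) <= p x + p y)
  (p_homo : forall (t : R) x, 0 < t -> p (t *: x) = t * p x).
Variables (S : set V) (g : V -> R).
Hypotheses (S0 : S 0) (SD : forall x y, S x -> S y -> S (x + y))
  (SZ : forall (a : R) x, S x -> S (a *: x))
  (gD : forall x y, S x -> S y -> g (x + y) = g x + g y)
  (gZ : forall (a : R) x, S x -> g (a *: x) = a * g x)
  (g_le_p : forall x, S x -> g x <= p x).

Definition extension_graph (G : set (V * R)) : Prop :=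
  [/\ (forall x a b, G (x, a) -> G (x, b) -> a = b),
      (forall x a y b, G (x, a) -> G (y, b) -> G (x + y, a + b)),
      (forall t x a, G (x, a) -> G (t *: x, t * a)),
      (forall x a, G (x, a) -> a <= p x) &
      (forall y, S y -> G (y, g y))].

(* [Zorn_bigcup] requires the union of the empty chain, [set0], to qualify. *)
Definition empty_or_extension_graph (G : set (V * R)) : Prop :=
  G = set0 \/ extension_graph G.

Lemma extension_graph_of_g : extension_graph [set q | S q.1 /\ q.2 = g q.1].
Proof.
split.
- by move=> x a b /= [_ ->] [_ ->].
- by move=> x a y b /= [Sx ->] [Sy ->]; rewrite gD //; split => //; exact: SD.
- by move=> t x a /= [Sx ->]; rewrite gZ //; split => //; exact: SZ.
- by move=> x a /= [Sx ->]; exact: g_le_p.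
- by move=> y Sy.
Qed.

Lemma extension_graph00 G : extension_graph G -> G (0, 0).
Proof.
case=> _ _ G_scale _ G_g.
by have := G_scale 0 _ _ (G_g 0 S0); rewrite scale0r mul0r.
Qed.

Lemma extension_graph_bigcup (F : set (set (V * R))) G0 :
  F `<=` empty_or_extension_graph -> total_on F subset ->
  F G0 -> extension_graph G0 -> extension_graph (\bigcup_(G in F) G).
Proof.
move=> FP Ftot FG0 G0_ext.
have member_ext G q : F G -> G q -> extension_graph G.
  by move=> FG Gq; case: (FP G FG) => // G_0; rewrite G_0 in Gq.
have common G1 G2 q1 q2 : F G1 -> F G2 -> G1 q1 -> G2 q2 ->
    exists2 G, F G & G q1 /\ G q2.
  move=> F1 F2 h1 h2; case: (Ftot _ _ F1 F2) => sub.
    by exists G2 => //; split => //; exact: sub.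
  by exists G1 => //; split => //; exact: sub.
split.
- move=> x a b [G1 F1 h1] [G2 F2 h2].
  have [G FG [k1 k2]] := common _ _ _ _ F1 F2 h1 h2.
  by have [G_fun _ _ _ _] := member_ext _ _ FG k1; exact: G_fun k1 k2.
- move=> x a y b [G1 F1 h1] [G2 F2 h2].
  have [G FG [k1 k2]] := common _ _ _ _ F1 F2 h1 h2.
  by have [_ G_add _ _ _] := member_ext _ _ FG k1; exists G => //; exact: G_add.
- move=> t x a [G FG h]; have [_ _ G_scale _ _] := member_ext _ _ FG h.
  by exists G => //; exact: G_scale.
- move=> x a [G FG h]; have [_ _ _ G_le _] := member_ext _ _ FG h.
  exact: G_le.
- by move=> y Sy; have [_ _ _ _ G_g] := G0_ext; exists G0 => //; exact: G_g.
Qed.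

Lemma empty_or_extension_graph_bigcup (F : set (set (V * R))) :
  F `<=` empty_or_extension_graph -> total_on F subset ->
  empty_or_extension_graph (\bigcup_(G in F) G).
Proof.
move=> FP Ftot.
have [[G0 FG0 G0_ext]|none] := pselect (exists2 G, F G & extension_graph G).
  by right; exact: extension_graph_bigcup FG0 G0_ext.
left; apply/seteqP; split => // q [G FG Gq].
by case: (FP G FG) => [G_0|G_ext]; [rewrite G_0 in Gq | apply: none; exists G].
Qed.

Section OneStep.
Variables (A : set (V * R)) (x0 : V).
Hypothesis A_ext : extension_graph A.

Lemma exists_step_value : exists c,
  (forall x a, A (x, a) -> a - p (x - x0) <= c) /\
  (forall y b, A (y, b) -> c <= p (y + x0) - b).
Proof.
have [_ A_add _ A_le _] := A_ext.
have A00 := extension_graph00 A_ext.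
pose L := [set r | exists x a, A (x, a) /\ r = a - p (x - x0)].
have L_ub y b : A (y, b) -> ubound L (p (y + x0) - b).
  move=> Ayb _ [x [a [Axa ->]]].
  have := p_subadd (x - x0) (y + x0).
  rewrite addrACA addNr addr0 => pxy.
  have := A_le _ _ (A_add _ _ _ _ Axa Ayb); lra.
have L_bounded : has_ubound L by exists (p (0 + x0) - 0); exact: L_ub.
have L_nonempty : L !=set0 by exists (0 - p (0 - x0)), 0, 0.
exists (sup L); split.
  by move=> x a Axa; apply: ub_le_sup => //; exists x, a.
by move=> y b Ayb; apply: ge_sup => //; exact: L_ub.
Qed.

Hypothesis x0_notin : forall a, ~ A (x0, a).
Variable c : R.
Hypotheses (c_ge : forall x a, A (x, a) -> a - p (x - x0) <= c)
  (c_le : forall y b, A (y, b) -> c <= p (y + x0) - b).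

Definition step_graph : set (V * R) :=
  [set q | exists x a t, A (x, a) /\ q = (x + t *: x0, a + t * c)].

Lemma step_graph_functional z a b :
  step_graph (z, a) -> step_graph (z, b) -> a = b.
Proof.
have [A_fun A_add A_scale _ _] := A_ext.
move=> [x [a' [t [Axa [ez ->]]]]] [y [b' [s [Ayb [ez' ->]]]]].
have e : y = x + t *: x0 - s *: x0 by rewrite -ez ez' addrK.
have [ts|ts] := eqVneq t s.
  by rewrite -ts addrK in e; rewrite e in Ayb; rewrite ts (A_fun _ _ _ Axa Ayb).
have Adiff : A (y - x, b' - a').
  by have := A_add _ _ _ _ Ayb (A_scale (-1) _ _ Axa); rewrite scaleN1r mulN1r.
have x0E : (t - s)^-1 *: (y - x) = x0.
  rewrite e -[x + _ - _]addrA (addrC x) addrK -scalerBl scalerA.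
  by rewrite mulVf ?scale1r // subr_eq0.
have := A_scale (t - s)^-1 _ _ Adiff; rewrite x0E => Ax0.
by case: (x0_notin Ax0).
Qed.

Lemma step_graph_le z a : step_graph (z, a) -> a <= p z.
Proof.
have [_ _ A_scale A_le _] := A_ext.
move=> [x [a' [t [Axa [-> ->]]]]].
have [t_neg|t_pos|->] := ltgtP t 0.
- have s_pos : 0 < - t by rewrite oppr_gt0.
  have := c_ge (A_scale (- t)^-1 _ _ Axa).
  have -> : x + t *: x0 = (- t) *: ((- t)^-1 *: x - x0).
    by rewrite scalerBr scalerA mulfV ?gt_eqF // scale1r scaleNr opprK.
  rewrite p_homo // => h; have := ler_wpM2l (ltW s_pos) h.
  rewrite mulrBr mulrA mulfV ?gt_eqF // mul1r; lra.
- have := c_le (A_scale t^-1 _ _ Axa).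
  have -> : x + t *: x0 = t *: (t^-1 *: x + x0).
    by rewrite scalerDr scalerA mulfV ?gt_eqF // scale1r.
  rewrite p_homo // => h; have := ler_wpM2l (ltW t_pos) h.
  rewrite mulrBr mulrA mulfV ?gt_eqF // mul1r; lra.
- by rewrite scale0r mul0r !addr0; exact: A_le.
Qed.

Lemma extension_graph_step : extension_graph step_graph.
Proof.
have [_ A_add A_scale _ A_g] := A_ext.
split.
- exact: step_graph_functional.
- move=> _ _ _ _ [x [a [t [Axa [-> ->]]]]] [y [b [s [Ayb [-> ->]]]]].
  exists (x + y), (a + b), (t + s); split; first exact: A_add.
  by congr pair; rewrite (scalerDl, mulrDl) addrACA.
- move=> r _ _ [x [a [t [Axa [-> ->]]]]].
  exists (r *: x), (r * a), (r * t); split; first exact: A_scale.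
  by rewrite scalerDr scalerA mulrDr mulrA.
- exact: step_graph_le.
- move=> y Sy; exists y, (g y), 0; split; first exact: A_g.
  by rewrite scale0r mul0r !addr0.
Qed.

Lemma step_graph_proper : A `<` step_graph.
Proof.
split.
  by move=> [x a] Axa; exists x, a, 0; rewrite scale0r mul0r !addr0.
have step_x0 : step_graph (x0, c).
  exists 0, 0, 1; rewrite scale1r mul1r !add0r; split => //.
  exact: extension_graph00.
by move=> /(_ _ step_x0)/x0_notin.
Qed.

End OneStep.

Theorem hahn_banach : exists f : V -> R,
  [/\ (forall x y, f (x + y) = f x + f y),
      (forall (a : R) x, f (a *: x) = a * f x),
      (forall x, S x -> f x = g x) & forall x, f x <= p x].
Proof.
have [A [A_P A_max]] := Zorn_bigcup empty_or_extension_graph_bigcup.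
have A_ext : extension_graph A.
  case: A_P => // A_0; exfalso.
  apply: (A_max _ _ (or_intror extension_graph_of_g)); rewrite A_0.
  split => // sub; exact: (sub (0, g 0) (conj S0 erefl)).
have A_total x0 : exists a, A (x0, a).
  apply: contrapT => x0_notin.
  have {}x0_notin a : ~ A (x0, a) by move=> Aa; apply: x0_notin; exists a.
  have [c [c_ge c_le]] := exists_step_value x0 A_ext.
  apply: (A_max (step_graph A x0 c)); first exact: step_graph_proper.
  by right; apply: extension_graph_step.
have [f Af] := choice A_total.
have [A_fun A_add A_scale A_le A_g] := A_ext.
exists f; split.
- by move=> x y; apply: A_fun (Af _) (A_add _ _ _ _ (Af x) (Af y)).
- by move=> a x; apply: A_fun (Af _) (A_scale _ _ _ (Af x)).
- by move=> x Sx; apply: A_fun (Af x) (A_g _ Sx).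
- by move=> x; exact: A_le (Af x).
Qed.

End HahnBanach.

Section DualNorm.
Variables (R : realType) (X : normedModType R).
Implicit Types (S Z : set X) (f u w : X -> R).

Lemma linear_on0 S f : S 0 -> linear_on S f -> f 0 = 0.
Proof.
move=> S0 f_lin; apply: (@addrI _ (f 0)); rewrite addr0.
by have := f_lin 1 0 0 S0 S0; rewrite scaler0 addr0 mul1r => /esym.
Qed.

Lemma linear_onZ S f a x : S 0 -> S x -> linear_on S f -> f (a *: x) = a * f x.
Proof.
move=> S0 Sx f_lin; have := f_lin a x 0 Sx S0.
by rewrite addr0 (linear_on0 S0 f_lin) addr0.
Qed.

Lemma linear_onD S f x y : S x -> S y -> linear_on S f -> f (x + y) = f x + f y.
Proof.
by move=> Sx Sy f_lin; have := f_lin 1 x y Sx Sy; rewrite scale1r mul1r.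
Qed.

Lemma bounded_on_has_ubound S f : bounded_on S f ->
  has_ubound [set `|f x| | x in [set x | S x /\ `|x| <= 1]].
Proof.
case=> M f_bound; exists `|M| => _ [x [Sx x_le1] <-].
apply: le_trans (f_bound x Sx) _; apply: le_trans (ler_norm _) _.
by rewrite normrM ler_piMr ?normr_id.
Qed.

Lemma norm_le_fnorm S f x : functional_on S f -> S x -> `|x| <= 1 ->
  `|f x| <= fnorm S f.
Proof.
case=> _ f_bound Sx x_le1; apply: (ub_le_sup (bounded_on_has_ubound f_bound)).
by exists x.
Qed.

Lemma fnorm_le S f M : S 0 -> (forall x, S x -> `|x| <= 1 -> `|f x| <= M) ->
  fnorm S f <= M.
Proof.
move=> S0 f_le; apply: ge_sup.
  by exists `|f 0|, 0; split => //; rewrite normr0.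
by move=> _ [x [Sx x_le1] <-]; exact: f_le.
Qed.

Lemma fnorm_ge0 S f : S 0 -> functional_on S f -> 0 <= fnorm S f.
Proof.
move=> S0 f_fun; apply: le_trans (normr_ge0 (f 0)) (norm_le_fnorm f_fun S0 _).
by rewrite normr0.
Qed.

Lemma norm_le_fnormM S f x : S 0 -> (forall (a : R) y, S y -> S (a *: y)) ->
  functional_on S f -> S x -> `|f x| <= fnorm S f * `|x|.
Proof.
move=> S0 SZ f_fun Sx; have [->|x_neq0] := eqVneq x 0.
  by rewrite (linear_on0 S0 f_fun.1) !normr0 mulr0.
have x_pos : 0 < `|x| by rewrite normr_gt0.
have f_unit : `|f (`|x|^-1 *: x)| <= fnorm S f.
  apply: norm_le_fnorm f_fun (SZ _ _ Sx) _.
  by rewrite normrZ ger0_norm ?invr_ge0 // mulVf ?gt_eqF.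
rewrite -ler_pdivrMr // mulrC -[`|x|^-1]ger0_norm ?invr_ge0 // -normrM.
by rewrite -(linear_onZ _ S0 Sx f_fun.1).
Qed.

Lemma dual_norm_le_fnormM f x : dual f -> `|f x| <= fnorm setT f * `|x|.
Proof. by move=> f_dual; apply: norm_le_fnormM. Qed.

Lemma dual_eq0 f x : dual f -> fnorm setT f = 0 -> f x = 0.
Proof.
move=> f_dual f0; apply/eqP; rewrite -normr_le0 -(mul0r `|x|) -f0.
exact: dual_norm_le_fnormM.
Qed.

Lemma dualB u w : dual u -> dual w -> dual (u \- w).
Proof.
move=> [u_lin [Mu u_bound]] [w_lin [Mw w_bound]]; split.
  by move=> a x y _ _ /=; rewrite (u_lin a x y) // (w_lin a x y) //; lra.
exists (Mu + Mw) => x _ /=; apply: le_trans (ler_normB _ _) _.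
by rewrite mulrDl lerD ?u_bound ?w_bound.
Qed.

Lemma fnorm_attained_addl u w y0 : dual u -> dual w -> `|y0| = 1 ->
  u y0 + w y0 = fnorm setT u + fnorm setT w -> u y0 = fnorm setT u.
Proof.
move=> u_dual w_dual y0_1 uw_y0.
have y0_le1 : `|y0| <= 1 by rewrite y0_1.
have := le_trans (ler_norm _) (norm_le_fnorm u_dual I y0_le1).
have := le_trans (ler_norm _) (norm_le_fnorm w_dual I y0_le1).
lra.
Qed.

Lemma hahn_banach_fnorm S g : S 0 -> (forall x y, S x -> S y -> S (x + y)) ->
  (forall (a : R) x, S x -> S (a *: x)) -> functional_on S g ->
  exists f, [/\ dual f, (forall x, S x -> f x = g x) &
    fnorm setT f = fnorm S g].
Proof.
move=> S0 SD SZ g_fun; set N := fnorm S g.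
have N_ge0 : 0 <= N := fnorm_ge0 S0 g_fun.
have pD (x y : X) : N * `|x + y| <= N * `|x| + N * `|y|.
  by rewrite -mulrDr ler_wpM2l ?ler_normD.
have pZ (t : R) (x : X) : 0 < t -> N * `|t *: x| = t * (N * `|x|).
  by move=> t_pos; rewrite normrZ gtr0_norm // mulrCA.
have gD x y : S x -> S y -> g (x + y) = g x + g y.
  by move=> Sx Sy; exact: linear_onD Sx Sy g_fun.1.
have gZ a x : S x -> g (a *: x) = a * g x.
  by move=> Sx; exact: linear_onZ S0 Sx g_fun.1.
have g_le x : S x -> g x <= N * `|x|.
  by move=> Sx; apply: le_trans (ler_norm _) (norm_le_fnormM S0 SZ g_fun Sx).
have [f [fD fZ fg f_le]] :=
  hahn_banach (p := fun x => N * `|x|) pD pZ S0 SD SZ gD gZ g_le.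
have f_bound x : `|f x| <= N * `|x|.
  rewrite ler_norml f_le andbT lerNl -mulN1r -fZ.
  by have := f_le (-1 *: x); rewrite normrZ normrN1 mul1r.
have f_dual : dual f.
  by split; [move=> a x y _ _; rewrite fD fZ | exists N].
exists f; split => //; apply/eqP; rewrite eq_le; apply/andP; split.
  apply: fnorm_le => // x _ x_le1; apply: le_trans (f_bound x) _.
  by rewrite -[leRHS]mulr1 ler_wpM2l.
by apply: fnorm_le S0 _ => x Sx x_le1; rewrite -fg //; exact: norm_le_fnorm.
Qed.

Lemma annihilator0 Z : annihilator Z (fun=> 0).
Proof.
split=> //; split; first by move=> a x y _ _; rewrite mulr0 addr0.
by exists 0 => x _; rewrite normr0 mul0r.
Qed.

(* Uniqueness in [semi_M_ideal] is required of every decomposition, not only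
   of the l1 ones; this is what makes [W] injective modulo [Z^perp]. *)
Lemma semi_M_ideal_decomposition Z : semi_M_ideal Z ->
  exists W : set (X -> R), [/\ (forall w, W w -> dual w),
    (forall f, dual f -> exists u w, [/\ annihilator Z u, W w,
       (forall x, f x = u x + w x) &
       fnorm setT f = fnorm setT u + fnorm setT w]) &
    (forall w w', W w -> W w' -> annihilator Z (w \- w') -> w' = w)].
Proof.
case=> _ [W [[W_dual _] decomp]]; exists W; split => //.
  by move=> f /decomp [u [w [? ? ? ? _]]]; exists u, w.
move=> w w' Ww Ww' ww'_Z.
have [u0 [w0 [_ _ _ _ decomp_uniq]]] := decomp w (W_dual w Ww).
have [_ eq_w] := decomp_uniq _ w (annihilator0 Z) Ww (fun x => esym (add0r _)).
have [_ eq_w'] := decomp_uniq _ w' ww'_Z Ww' (fun x => esym (subrK _ _)).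
by apply/funext => x; rewrite eq_w' eq_w.
Qed.

End DualNorm.

Section Quotient.
Variables (R : realType) (X : normedModType R) (Z : set X).
Hypothesis Z0 : Z 0.
Implicit Types (S : set X) (u : X -> R).

Lemma qnorm_le_norm x : qnorm Z x <= `|x|.
Proof.
have Zx_lb : has_lbound [set `|x + z| | z in Z] by exists 0 => _ [z _ <-].
by have := ge_inf Zx_lb (ex_intro2 _ _ 0 Z0 erefl); rewrite addr0.
Qed.

Lemma annihilator_le_qnorm u x : annihilator Z u ->
  `|u x| <= fnorm setT u * qnorm Z x.
Proof.
move=> [u_dual uZ]; have [u0|u_neq0] := eqVneq (fnorm setT u) 0.
  by rewrite u0 mul0r (dual_eq0 _ u_dual u0) normr0 lexx.
have u_pos : 0 < fnorm setT u by rewrite lt_def u_neq0 fnorm_ge0.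
rewrite mulrC -ler_pdivrMr //; apply: lb_le_inf; first by exists `|x + 0|, 0.
move=> _ [z Zz <-]; rewrite ler_pdivrMr // mulrC.
rewrite -[u x]addr0 -(uZ z Zz) -(linear_onD I I u_dual.1).
exact: dual_norm_le_fnormM.
Qed.

Lemma annihilator_qfunctional S u : annihilator Z u -> qfunctional_on Z S u.
Proof.
move=> u_ann; split; [by move=> a x y _ _; apply: u_ann.1.1 | exact: u_ann.2 |].
by exists (fnorm setT u) => x _; exact: annihilator_le_qnorm.
Qed.

Lemma qfnorm_annihilator S u y0 : annihilator Z u -> S y0 -> qnorm Z y0 <= 1 ->
  `|u y0| = fnorm setT u -> qfnorm Z S u = fnorm setT u.
Proof.
move=> u_ann Sy0 qy0_le1 u_y0.
have u_le x : qnorm Z x <= 1 -> `|u x| <= fnorm setT u.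
  move=> qx_le1; apply: le_trans (annihilator_le_qnorm x u_ann) _.
  by rewrite -[leRHS]mulr1 ler_wpM2l ?fnorm_ge0 //; exact: u_ann.1.
apply/eqP; rewrite eq_le; apply/andP; split.
  apply: ge_sup; first by exists `|u y0|, y0.
  by move=> _ [x [_ qx_le1] <-]; exact: u_le.
rewrite -u_y0; apply: ub_le_sup; last by exists y0.
by exists (fnorm setT u) => _ [x [_ qx_le1] <-]; exact: u_le.
Qed.

Lemma qnorm_norming_eq1 u y0 : annihilator Z u -> `|y0| = 1 ->
  u y0 = fnorm setT u -> 0 < fnorm setT u -> qnorm Z y0 = 1.
Proof.
move=> u_ann y0_1 u_y0 u_pos.
apply/eqP; rewrite eq_le -{1}y0_1 qnorm_le_norm /=.
rewrite -(ler_pM2l u_pos) mulr1 -{1}u_y0.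
exact: le_trans (ler_norm _) (annihilator_le_qnorm y0 u_ann).
Qed.

Lemma annihilator_eq_of_quotient_wU Y u u' y0 : quotient_property_wU Z Y ->
  annihilator Z u -> annihilator Z u' -> (forall y, Y y -> u' y = u y) ->
  fnorm setT u' = fnorm setT u -> Y y0 -> `|y0| = 1 -> u y0 = fnorm setT u ->
  forall x, u' x = u x.
Proof.
move=> qwU u_ann u'_ann uu' u'_norm Yy0 y0_1 u_y0 x.
have [u0|u_neq0] := eqVneq (fnorm setT u) 0.
  by rewrite !dual_eq0 ?u'_norm //; [exact: u_ann.1 | exact: u'_ann.1].
have u_pos : 0 < fnorm setT u.
  by rewrite lt_def u_neq0 fnorm_ge0 //; exact: u_ann.1.
have qy0 := qnorm_norming_eq1 u_ann y0_1 u_y0 u_pos.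
have qy0_le1 : qnorm Z y0 <= 1 by rewrite qy0.
have u_y0_abs : `|u y0| = fnorm setT u by rewrite u_y0 gtr0_norm.
have u'_y0_abs : `|u' y0| = fnorm setT u' by rewrite uu' // u'_norm.
have qY := qfnorm_annihilator u_ann Yy0 qy0_le1 u_y0_abs.
have qT := qfnorm_annihilator u_ann (I : setT y0) qy0_le1 u_y0_abs.
have qT' := qfnorm_annihilator u'_ann (I : setT y0) qy0_le1 u'_y0_abs.
have [f0 [_ _ _ f0_uniq]] := qwU u (annihilator_qfunctional Y u_ann)
  (ex_intro _ y0 (And3 Yy0 qy0 (etrans u_y0 (esym qY)))).
rewrite (f0_uniq u' (annihilator_qfunctional _ u'_ann) uu'); last first.
  by rewrite qT' u'_norm qY.
by rewrite (f0_uniq u (annihilator_qfunctional _ u_ann)) // qT qY.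
Qed.

End Quotient.

Theorem theorem2p2 (R : realType) (X : completeNormedModType R)
  (Y Z : set X) :
  closed_subspace Y -> closed_subspace Z -> Z `<=` Y ->
  semi_M_ideal Z -> quotient_property_wU Z Y ->
  property_wU Y.
Proof.
move=> [Y0 YD YZ _] [Z0 _ _ _] ZY
  /semi_M_ideal_decomposition [W [W_dual decomp W_inj]] qwU
  g g_fun [y0 [Yy0 y0_1 g_y0]].
have [f [f_dual fg f_norm]] := hahn_banach_fnorm Y0 YD YZ g_fun.
exists f; split => // f' f'_dual f'g f'_norm.
have [u [w [u_ann Ww fuw f_l1]]] := decomp f f_dual.
have [u' [w' [u'_ann Ww' f'uw' f'_l1]]] := decomp f' f'_dual.
have ww' : w' = w.
  apply: W_inj => //; split; first exact: dualB (W_dual _ Ww) (W_dual _ Ww').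
  move=> z Zz /=; have Yz := ZY z Zz; have := fuw z; have := f'uw' z.
  by rewrite u_ann.2 // u'_ann.2 // !add0r fg // f'g // => <- <-; rewrite subrr.
subst w'.
have uu' y : Y y -> u' y = u y.
  by move=> Yy; apply: (addIr (w y)); rewrite -fuw -f'uw' fg ?f'g.
have u'_norm : fnorm setT u' = fnorm setT u.
  by apply: (addIr (fnorm setT w)); rewrite -f_l1 -f'_l1 f'_norm f_norm.
have u_y0 : u y0 = fnorm setT u.
  apply: fnorm_attained_addl u_ann.1 (W_dual _ Ww) y0_1 _.
  by rewrite -fuw -f_l1 fg // f_norm.
move=> x; rewrite fuw f'uw'.
by rewrite (annihilator_eq_of_quotient_wU Z0 qwU u_ann u'_ann uu' u'_norm
  Yy0 y0_1 u_y0).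
Qed.
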